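(* Fix $y_0\in[-1,1]$ and let $\mathfrak h_N(t)=N^{-(1+\alpha)}\mathfrak h(t,[Ny_0])$. For any initial configurations $\eta$, $$\lim_{L\to\infty}\lim_{N\to\infty}\frac{1}{N^{1+\alpha}}\log P_\eta\Big(\sup_{0\le t\le T}|\mathfrak h_N(t)|\ge L\Big)=-\infty.$$
   Context: Fix $\alpha>0$, $T>0$, $a\in(0,1/2)$ and $C^1$ functions $\rho_\pm:[0,T]\to[a,1-a]$. For $N\ge1$, $\Lambda_N=\{-N,\dots,N\}$, configurations $\eta\in\{0,1\}^{\Lambda_N}$. The process $(\eta_t)$ is the time-inhomogeneous Markov process with generator $L_{N,t}=N^{2+\alpha}(L_{\rm exc}+L_{b,t})$, $L_{\rm exc}f(\eta)=\sum_{x=-N}^{N-1}[f(\eta^{(x,x+1)})-f(\eta)]$, $L_{b,t}f(\eta)=\sum_{\sigma=\pm}\rho_\sigma(t)^{1-\eta(\sigma N)}(1-\rho_\sigma(t))^{\eta(\sigma N)}[f(\eta^{\sigma N})-f(\eta)]$ ($\eta^{(x,x+1)}$ exchanges occupations at $x,x+1$, $\eta^z$ flips the occupation at $z$); $P_\eta$ is its law started from $\eta$. For $x=-N-1,\dots,N$, $\mathfrak h(t,x)=\mathfrak h_+(t,x)-\mathfrak h_-(t,x)$, where $\mathfrak h_+(t,x)$ counts jumps from $x$ to $x+1$ during $[0,t]$ and $\mathfrak h_-(t,x)$ jumps from $x+1$ to $x$ (at $x=-N-1$ these are creations/annihilations at site $-N$, at $x=N$ annihilations/creations at site $N$). *)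

From Stdlib Require Import Reals ZArith List Lra ClassicalEpsilon.
From Coquelicot Require Import Coquelicot.
Import ListNotations.
Open Scope R_scope.

(** Configurations on Lambda_N = {-N..N}: only the values on Lambda_N matter. *)
Definition config := Z -> bool.

Inductive side := Plus | Minus.

Definition side_site (N : nat) (s : side) : Z :=
  match s with Plus => Z.of_nat N | Minus => (- Z.of_nat N)%Z end.

(** Effective transitions of the process (exchanges with equal occupations
    are no-ops and are not transitions). *)
Inductive move :=
  | HopR (x : Z)      (* particle jumps from x to x+1 *)
  | HopL (x : Z)      (* particle jumps from x+1 to x *)
  | Create (s : side)
  | Annih (s : side).

Definition bonds (N : nat) : list Z :=
  map (fun i => (- Z.of_nat N + Z.of_nat i)%Z) (seq 0 (2 * N)).

Definition moves (N : nat) : list move :=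
  flat_map (fun x => [HopR x; HopL x]) (bonds N) ++
  [Create Plus; Create Minus; Annih Plus; Annih Minus].

Definition setc (xi : config) (z : Z) (b : bool) : config :=
  fun y => if Z.eqb y z then b else xi y.

Definition apply_move (N : nat) (m : move) (xi : config) : config :=
  match m with
  | HopR x => setc (setc xi x false) (x + 1)%Z true
  | HopL x => setc (setc xi x true) (x + 1)%Z false
  | Create s => setc xi (side_site N s) true
  | Annih s => setc xi (side_site N s) false
  end.

(** Transition rates of L_{N,t} = N^{2+alpha} (L_exc + L_{b,t}). *)
Definition rate (N : nat) (alpha : R) (rp rm : R -> R) (t : R)
    (xi : config) (m : move) : R :=
  let c := Rpower (INR N) (2 + alpha) in
  let rho s := match s with Plus => rp t | Minus => rm t end in
  match m with
  | HopR x => if andb (xi x) (negb (xi (x + 1)%Z)) then c else 0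
  | HopL x => if andb (negb (xi x)) (xi (x + 1)%Z) then c else 0
  | Create s => if xi (side_site N s) then 0 else c * rho s
  | Annih s => if xi (side_site N s) then c * (1 - rho s) else 0
  end.

Definition sumR {A : Type} (f : A -> R) (l : list A) : R :=
  fold_right (fun a acc => f a + acc) 0 l.

Definition total_rate N alpha rp rm t xi : R :=
  sumR (rate N alpha rp rm t xi) (moves N).

(** Path history: list of (jump time, move), in chronological order. *)
Definition history := list (R * move).

(** Law of the path on [0,T] via the standard jump-density formula:
    [Qk N .. F k s xi h] is the contribution of paths that, from state xi at
    time s (with past jumps h), perform exactly k further jumps in (s,T],
    weighted by F applied to the full history. *)
Fixpoint Qk (N : nat) (alpha T : R) (rp rm : R -> R) (F : history -> R)
    (k : nat) (s : R) (xi : config) (h : history) : R :=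
  match k with
  | O => exp (- RInt (fun u => total_rate N alpha rp rm u xi) s T) * F h
  | S k' =>
      RInt (fun t =>
        exp (- RInt (fun u => total_rate N alpha rp rm u xi) s t) *
        sumR (fun m => rate N alpha rp rm t xi m *
                       Qk N alpha T rp rm F k' t (apply_move N m xi)
                          (h ++ [(t, m)])) (moves N)) s T
  end.

Definition expect (N : nat) (alpha T : R) (rp rm : R -> R) (eta : config)
    (F : history -> R) : R :=
  Series (fun k => Qk N alpha T rp rm F k 0 eta []).

Definition indic (P : history -> Prop) : history -> R :=
  fun h => if excluded_middle_informative (P h) then 1 else 0.

Definition prob N alpha T rp rm eta (A : history -> Prop) : R :=
  expect N alpha T rp rm eta (indic A).

(** Increment of the current h(.,x) produced by a move, x in {-N-1,...,N}. *)
Definition curr_incr (N : nat) (x : Z) (m : move) : Z :=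
  match m with
  | HopR y => if Z.eqb y x then 1%Z else 0%Z
  | HopL y => if Z.eqb y x then (-1)%Z else 0%Z
  | Create Minus => if Z.eqb x (- Z.of_nat N - 1)%Z then 1%Z else 0%Z
  | Annih Minus => if Z.eqb x (- Z.of_nat N - 1)%Z then (-1)%Z else 0%Z
  | Annih Plus => if Z.eqb x (Z.of_nat N) then 1%Z else 0%Z
  | Create Plus => if Z.eqb x (Z.of_nat N) then (-1)%Z else 0%Z
  end.

Definition current (N : nat) (h : history) (t : R) (x : Z) : Z :=
  fold_right (fun tm acc =>
    ((if Rle_dec (fst tm) t then curr_incr N x (snd tm) else 0) + acc)%Z) 0%Z h.

Definition hN (N : nat) (alpha y0 : R) (h : history) (t : R) : R :=
  IZR (current N h t (Int_part (INR N * y0))) / Rpower (INR N) (1 + alpha).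

(** The event {sup_{0<=t<=T} |frak h_N(t)| >= L}; on paths with finitely many
    jumps, this sup is attained. *)
Definition big_current_event (N : nat) (alpha y0 T L : R) (h : history) : Prop :=
  exists t, 0 <= t <= T /\ L <= Rabs (hN N alpha y0 h t).

From Stdlib Require Import Reals ZArith List Lra Lia Sorting ClassicalEpsilon.
From Coquelicot Require Import Coquelicot.
Import ListNotations.
Open Scope R_scope.

(* The bound comes from an exponential supermartingale. Let [A] be the total current, the sum
   of [h(t,x)] over the [K = 2N+2] bonds [x = -N-1, ..., N]. Particle conservation,
   [h(t,x-1) - h(t,x) = eta_t(x) - eta_0(x)], keeps every [h(t,x)] within [2N+1] of [A/K]. Each
   jump moves [A] by [±1] at rate at most [N^(2+alpha)], and the bulk contributions to its drift
   telescope, so [e^(c(T-t)) 2cosh(A/K)] with [c = 5 N^(2+alpha)/K] is a supersolution of the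
   backward equation. Stopped when [|h(t,[N y0])|] first reaches [L N^(1+alpha)], where it is
   already at least [e^(L N^(1+alpha) - 2N - 1)], it bounds the probability by
   [2 e^(cT + 2N + 1 - L N^(1+alpha))], and [c <= 5/2 N^(1+alpha)] gives the claim as soon as
   [L >= |M| + 5T/2 + 4]. The supermartingale property is used analytically: by Duhamel's
   formula and induction on the number of jumps, a supersolution dominates every partial sum of
   the jump-density series defining the expectation. *)

(** * Integrals, series and finite sums *)

(* Coquelicot's [RInt] takes the junk value 0 on non-integrable functions. The integrands of
   [Qk] are not known to be integrable, so the comparisons below do not assume it. *)
Lemma RInt_not_ex (f : R -> R) a b : ~ ex_RInt f a b -> RInt f a b = 0.
Proof.
  intros Hf. unfold RInt, iota, lim. simpl. unfold R_complete_lim.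
  match goal with |- context [Lub_Rbar ?S] =>
    assert (HS : forall r, S r);
    [ intros r y Hy; exfalso; apply Hf; exists y; exact Hy
    | destruct (Lub_Rbar_correct S) as [Hub _];
      destruct (Lub_Rbar S) as [r| |]; [exfalso| reflexivity| exfalso] ] end.
  - specialize (Hub (r + 1) (HS _)). simpl in Hub. lra.
  - exact (Hub 0 (HS _)).
Qed.

Lemma RInt_ge_0_gen (f : R -> R) a b : a <= b ->
  (forall x, a < x < b -> 0 <= f x) -> 0 <= RInt f a b.
Proof.
  intros Hab Hf. destruct (excluded_middle_informative (ex_RInt f a b)) as [He|He].
  - now apply RInt_ge_0.
  - rewrite RInt_not_ex; auto; lra.
Qed.

Lemma RInt_le_gen (f g : R -> R) a b : a <= b -> ex_RInt g a b ->
  (forall x, a < x < b -> 0 <= f x <= g x) -> RInt f a b <= RInt g a b.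
Proof.
  intros Hab Hg Hfg. destruct (excluded_middle_informative (ex_RInt f a b)) as [He|He].
  - apply RInt_le; auto. intros x Hx. apply Hfg; lra.
  - rewrite RInt_not_ex by auto. apply RInt_ge_0; auto. intros x Hx. destruct (Hfg x Hx); lra.
Qed.

Lemma sum_n_RInt_le (f : nat -> R -> R) (g : R -> R) a b k : a <= b ->
  ex_RInt g a b -> (forall j x, a < x < b -> 0 <= f j x) ->
  (forall x, a < x < b -> sum_n (fun j => f j x) k <= g x) ->
  sum_n (fun j => RInt (f j) a b) k <= RInt g a b.
Proof.
  intros Hab. revert g. induction k as [|k IH]; intros g Hg Hf Hsum.
  { rewrite sum_O. apply RInt_le_gen; auto. intros x Hx. specialize (Hsum x Hx).
    rewrite sum_O in Hsum. auto. }
  rewrite sum_Sn. unfold plus; simpl.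
  assert (Hrest : forall x, a < x < b -> sum_n (fun j => f j x) k <= g x - f (S k) x).
  { intros x Hx. specialize (Hsum x Hx). rewrite sum_Sn in Hsum. unfold plus in Hsum; simpl in Hsum. lra. }
  destruct (excluded_middle_informative (ex_RInt (f (S k)) a b)) as [He|He].
  - assert (Hgf : ex_RInt (fun x => g x - f (S k) x) a b) by now apply (ex_RInt_minus g).
    replace (RInt g a b) with (RInt (fun x => g x - f (S k) x) a b + RInt (f (S k)) a b).
    + apply Rplus_le_compat_r. now apply IH.
    + rewrite <- (RInt_plus (fun x => g x - f (S k) x)) by auto.
      apply RInt_ext. intros x _. unfold plus; simpl. ring.
  - rewrite (RInt_not_ex _ _ _ He), Rplus_0_r. apply IH; auto.
    intros x Hx. specialize (Hrest x Hx). specialize (Hf (S k) x Hx). lra.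
Qed.

Lemma is_derive_continuous (f : R -> R) x l : is_derive f x l -> continuous f x.
Proof. intros H. apply (ex_derive_continuous (V := R_NormedModule)). now exists l. Qed.

Lemma is_derive_RInt_upper (f : R -> R) a t : (forall u, continuous f u) ->
  is_derive (fun u => RInt f a u) t (f t).
Proof.
  intros Hf. apply (is_derive_RInt f _ a); auto.
  apply filter_forall. intros u. apply (RInt_correct (V := R_CompleteNormedModule)).
  apply ex_RInt_continuous. auto.
Qed.

Lemma is_derive_exp_neg_RInt (f : R -> R) a t : (forall u, continuous f u) ->
  is_derive (fun u => exp (- RInt f a u)) t (- f t * exp (- RInt f a t)).
Proof.
  intros Hf. apply (is_derive_comp exp (fun u => - RInt f a u)); [apply is_derive_exp|].
  apply (is_derive_opp (fun u => RInt f a u)). now apply is_derive_RInt_upper.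
Qed.

Lemma is_derive_nonpos_le (f df : R -> R) a b : a <= b ->
  (forall x, a <= x <= b -> is_derive f x (df x)) ->
  (forall x, a <= x <= b -> df x <= 0) -> f b <= f a.
Proof.
  intros Hab Hd Hneg.
  destruct (MVT_gen f a b df) as [c [Hc Hmvt]];
    rewrite ?Rmin_left, ?Rmax_right in * by lra.
  - intros x Hx. apply Hd. lra.
  - intros x Hx. apply continuity_pt_filterlim. apply (is_derive_continuous _ _ (df x)). auto.
  - specialize (Hneg c Hc). nra.
Qed.

(* [t |-> e^(-int_s^t Lam) Psi t + int_s^t e^(-int_s^u Lam) g u] has nonpositive derivative. *)
Lemma Duhamel_le (Lam g Psi dPsi : R -> R) s T : s <= T ->
  (forall t, continuous Lam t) -> (forall t, continuous g t) ->
  (forall t, s <= t <= T -> is_derive Psi t (dPsi t)) ->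
  (forall t, s <= t <= T -> dPsi t + g t <= Lam t * Psi t) ->
  exp (- RInt Lam s T) * Psi T + RInt (fun t => exp (- RInt Lam s t) * g t) s T <= Psi s.
Proof.
  intros HsT HLam Hg HPsi Hsuper.
  set (E := fun t => exp (- RInt Lam s t)).
  assert (HE : forall t, is_derive E t (- Lam t * E t)) by (intros t; now apply is_derive_exp_neg_RInt).
  assert (HEg : forall t, continuous (fun u => E u * g u) t).
  { intros t. apply (continuous_mult E g); auto. now apply (is_derive_continuous _ _ _ (HE t)). }
  set (G := fun t => E t * Psi t + RInt (fun u => E u * g u) s t).
  assert (HG : forall t, s <= t <= T ->
    is_derive G t (E t * (dPsi t + g t - Lam t * Psi t))).
  { intros t Ht. unfold G.
    assert (H := is_derive_plus _ _ t _ _ (is_derive_mult E Psi t _ _ (HE t) (HPsi t Ht) Rmult_comm)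
                   (is_derive_RInt_upper _ s t HEg)).
    unfold plus, mult in H; simpl in H.
    replace (E t * _) with (- Lam t * E t * Psi t + E t * dPsi t + E t * g t) by ring.
    exact H. }
  assert (HEs : E s = 1) by (unfold E; rewrite RInt_point; unfold zero; simpl; rewrite Ropp_0; apply exp_0).
  change (G T <= Psi s).
  replace (Psi s) with (G s) by (unfold G; rewrite HEs, RInt_point; unfold zero; simpl; ring).
  apply (is_derive_nonpos_le G _ s T HsT HG).
  intros t Ht. apply Rmult_le_0_l; [left; apply exp_pos|]. specialize (Hsuper t Ht). lra.
Qed.

Lemma sum_n_shift (a : nat -> R) k : sum_n a (S k) = a O + sum_n (fun j => a (S j)) k.
Proof.
  induction k as [|k IH].
  - rewrite sum_Sn, !sum_O. reflexivity.
  - rewrite sum_Sn, IH, (sum_Sn (fun j => a (S j))). unfold plus; simpl. ring.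
Qed.

Lemma sum_n_Rmult_l (c : R) (a : nat -> R) k : sum_n (fun j => c * a j) k = c * sum_n a k.
Proof. exact (sum_n_mult_l c a k). Qed.

Lemma Series_le_of_sum_n_le (a : nat -> R) B : (forall k, 0 <= a k) ->
  (forall k, sum_n a k <= B) -> Series a <= B.
Proof.
  intros Ha Hs. unfold Series.
  assert (H := Lim_seq_le_loc (sum_n a) (fun _ => B) (filter_forall _ Hs)).
  rewrite Lim_seq_const in H.
  specialize (Hs O). specialize (Ha O). rewrite sum_O in Hs.
  destruct (Lim_seq (sum_n a)); simpl in *; lra || contradiction.
Qed.

Lemma sumR_app {A} (f : A -> R) l1 l2 : sumR f (l1 ++ l2) = sumR f l1 + sumR f l2.
Proof. induction l1 as [|x l1 IH]; simpl; [ring|rewrite IH; ring]. Qed.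

Lemma sumR_flat_map {A B} (g : B -> R) (f : A -> list B) l :
  sumR g (flat_map f l) = sumR (fun x => sumR g (f x)) l.
Proof. induction l as [|x l IH]; simpl; auto. now rewrite sumR_app, IH. Qed.

Lemma sumR_ext {A} (f g : A -> R) l : (forall x, In x l -> f x = g x) -> sumR f l = sumR g l.
Proof. induction l as [|x l IH]; simpl; intros H; auto. rewrite H, IH; auto. Qed.

Lemma sumR_le {A} (f g : A -> R) l : (forall x, In x l -> f x <= g x) -> sumR f l <= sumR g l.
Proof. induction l as [|x l IH]; simpl; intros H; [lra|]. apply Rplus_le_compat; auto. Qed.

Lemma sumR_nonneg {A} (f : A -> R) l : (forall x, In x l -> 0 <= f x) -> 0 <= sumR f l.
Proof.
  intros H. induction l as [|x l IH]; simpl; [lra|].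
  assert (0 <= f x) by (apply H; now left). assert (0 <= sumR f l) by (apply IH; intros; apply H; now right).
  lra.
Qed.

Lemma sumR_plus {A} (f g : A -> R) l : sumR (fun x => f x + g x) l = sumR f l + sumR g l.
Proof. induction l as [|x l IH]; simpl; [ring|rewrite IH; ring]. Qed.

Lemma sumR_scal {A} (c : R) (f : A -> R) l : sumR (fun x => c * f x) l = c * sumR f l.
Proof. induction l as [|x l IH]; simpl; [ring|rewrite IH; ring]. Qed.

Lemma sumR_const {A} (c : R) (l : list A) : sumR (fun _ => c) l = INR (length l) * c.
Proof. induction l as [|x l IH]; simpl length; rewrite ?S_INR; simpl; [ring|rewrite IH; ring]. Qed.

Lemma sum_n_sumR {A} (q : nat -> A -> R) l k :
  sum_n (fun j => sumR (q j) l) k = sumR (fun x => sum_n (fun j => q j x) k) l.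
Proof.
  induction k as [|k IH].
  - rewrite sum_O. apply sumR_ext. intros; now rewrite sum_O.
  - rewrite sum_Sn, IH. unfold plus; simpl. rewrite <- sumR_plus.
    apply sumR_ext. intros x _. now rewrite sum_Sn.
Qed.

Lemma continuous_sumR {A} (f : R -> A -> R) l t :
  (forall x, continuous (fun u => f u x) t) -> continuous (fun u => sumR (f u) l) t.
Proof.
  intros H. induction l as [|x l IH]; simpl.
  - apply continuous_const.
  - now apply (continuous_plus (fun u => f u x) (fun u => sumR (f u) l)).
Qed.

(** * Supersolutions of the backward equation *)

Section Backward_inequality.

Variables (N : nat) (alpha T : R) (rp rm : R -> R).
Hypothesis rate_nonneg : forall t xi m, 0 <= t <= T -> 0 <= rate N alpha rp rm t xi m.
Hypothesis continuous_rate : forall xi m t, continuous (fun u => rate N alpha rp rm u xi m) t.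
Variable F : history -> R.
Hypothesis F_nonneg : forall h, 0 <= F h.

Local Notation Q := (Qk N alpha T rp rm F).
Local Notation Lam xi := (fun u => total_rate N alpha rp rm u xi).

Lemma Qk_nonneg k s xi h : 0 <= s <= T -> 0 <= Q k s xi h.
Proof.
  revert s xi h. induction k as [|k IH]; intros s xi h Hs; simpl.
  - apply Rmult_le_pos; [left; apply exp_pos|auto].
  - apply RInt_ge_0_gen; [lra|]. intros t Ht.
    apply Rmult_le_pos; [left; apply exp_pos|]. apply sumR_nonneg. intros m _.
    apply Rmult_le_pos; [apply rate_nonneg|apply IH]; lra.
Qed.

Lemma continuous_total_rate xi t : continuous (Lam xi) t.
Proof. apply (continuous_sumR (fun u m => rate N alpha rp rm u xi m)). auto. Qed.

Variables (Psi dPsi : R -> config -> history -> R) (Adm : R -> config -> history -> Prop).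
Hypothesis Psi_nonneg : forall t xi h, 0 <= Psi t xi h.
Hypothesis Psi_terminal : forall xi h, Adm T xi h -> F h <= Psi T xi h.
Hypothesis Adm_mono : forall s t xi h, s <= t -> Adm s xi h -> Adm t xi h.
Hypothesis Adm_jump : forall t xi h m, 0 <= t <= T -> Adm t xi h -> In m (moves N) ->
  rate N alpha rp rm t xi m <> 0 -> Adm t (apply_move N m xi) (h ++ [(t, m)]).
Hypothesis Psi_derive : forall t xi h, Adm t xi h ->
  is_derive (fun u => Psi u xi h) t (dPsi t xi h).
Hypothesis Psi_jump_continuous : forall xi h m t,
  continuous (fun u => Psi u (apply_move N m xi) (h ++ [(u, m)])) t.
Hypothesis Psi_backward : forall t xi h, 0 <= t <= T -> Adm t xi h ->
  dPsi t xi h + sumR (fun m => rate N alpha rp rm t xi m *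
    (Psi t (apply_move N m xi) (h ++ [(t, m)]) - Psi t xi h)) (moves N) <= 0.

Local Notation gain xi h := (fun t => sumR (fun m => rate N alpha rp rm t xi m *
  Psi t (apply_move N m xi) (h ++ [(t, m)])) (moves N)).

Lemma continuous_gain xi h t : continuous (gain xi h) t.
Proof.
  apply (continuous_sumR (fun u m => rate N alpha rp rm u xi m *
    Psi u (apply_move N m xi) (h ++ [(u, m)]))).
  intros m. apply (continuous_mult (fun u => rate N alpha rp rm u xi m)); auto.
Qed.

Lemma Psi_Duhamel s xi h : 0 <= s <= T -> Adm s xi h ->
  exp (- RInt (Lam xi) s T) * Psi T xi h
  + RInt (fun t => exp (- RInt (Lam xi) s t) * gain xi h t) s T <= Psi s xi h.
Proof.
  intros Hs Hadm.
  apply (Duhamel_le (Lam xi) (gain xi h) (fun u => Psi u xi h) (fun u => dPsi u xi h)); [lra|..].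
  - apply continuous_total_rate.
  - apply continuous_gain.
  - intros t Ht. apply Psi_derive. apply (Adm_mono s); [lra|auto].
  - intros t Ht. specialize (Psi_backward t xi h ltac:(lra) (Adm_mono s t xi h ltac:(lra) Hadm)).
    rewrite (sumR_ext _ (fun m => rate N alpha rp rm t xi m * Psi t (apply_move N m xi) (h ++ [(t, m)])
      + (- Psi t xi h) * rate N alpha rp rm t xi m)) in Psi_backward by (intros; ring).
    rewrite sumR_plus, sumR_scal in Psi_backward. unfold total_rate. lra.
Qed.

Lemma sum_Qk_le k s xi h : 0 <= s <= T -> Adm s xi h -> sum_n (fun j => Q j s xi h) k <= Psi s xi h.
Proof.
  revert s xi h. induction k as [|k IH]; intros s xi h Hs Hadm;
    assert (HD := Psi_Duhamel s xi h Hs Hadm);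
    assert (HQ0 : Q O s xi h <= exp (- RInt (Lam xi) s T) * Psi T xi h)
      by (apply Rmult_le_compat_l; [left; apply exp_pos|apply Psi_terminal, (Adm_mono s); [lra|auto]]).
  - rewrite sum_O. enough (0 <= RInt (fun t => exp (- RInt (Lam xi) s t) * gain xi h t) s T) by lra.
    apply RInt_ge_0_gen; [lra|]. intros t Ht.
    apply Rmult_le_pos; [left; apply exp_pos|]. apply sumR_nonneg. intros m _.
    apply Rmult_le_pos; [apply rate_nonneg; lra|auto].
  - rewrite sum_n_shift.
    enough (sum_n (fun j => Q (S j) s xi h) k <=
            RInt (fun t => exp (- RInt (Lam xi) s t) * gain xi h t) s T) by lra.
    apply sum_n_RInt_le; [lra|..].
    + apply (ex_RInt_continuous (V := R_CompleteNormedModule)). intros t _.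
      apply (continuous_mult (fun t => exp (- RInt (Lam xi) s t))); [|apply continuous_gain].
      apply (is_derive_continuous _ _ _ (is_derive_exp_neg_RInt _ s t (continuous_total_rate xi))).
    + intros j t Ht. apply Rmult_le_pos; [left; apply exp_pos|]. apply sumR_nonneg. intros m _.
      apply Rmult_le_pos; [apply rate_nonneg|apply Qk_nonneg]; lra.
    + intros t Ht. rewrite sum_n_Rmult_l, sum_n_sumR.
      apply Rmult_le_compat_l; [left; apply exp_pos|]. apply sumR_le. intros m Hm.
      rewrite sum_n_Rmult_l.
      destruct (Req_dec (rate N alpha rp rm t xi m) 0) as [E|E]; [rewrite E; lra|].
      apply Rmult_le_compat_l; [apply rate_nonneg; lra|]. apply IH; [lra|].
      apply Adm_jump; auto; [lra|]. apply (Adm_mono s); [lra|auto].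
Qed.

Lemma expect_le_Psi eta : 0 <= T -> Adm 0 eta [] ->
  expect N alpha T rp rm eta F <= Psi 0 eta [].
Proof.
  intros HT Hadm. apply Series_le_of_sum_n_le.
  - intros k. apply Qk_nonneg. lra.
  - intros k. apply sum_Qk_le; auto; lra.
Qed.

End Backward_inequality.

(** * Currents of a list of moves *)

Fixpoint zrange (a : Z) (n : nat) : list Z :=
  match n with O => [] | S n => a :: zrange (a + 1)%Z n end.

Lemma zrange_length a n : length (zrange a n) = n.
Proof. revert a; induction n; simpl; auto. Qed.

Lemma In_zrange a n x : In x (zrange a n) -> (a <= x < a + Z.of_nat n)%Z.
Proof.
  revert a; induction n as [|n IH]; simpl; intros a H; [contradiction|].
  destruct H as [<-|H]; [lia|]. apply IH in H. lia.
Qed.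

Lemma sumR_zrange_indicator a n y v : (a <= y < a + Z.of_nat n)%Z ->
  sumR (fun x => if Z.eqb x y then v else 0) (zrange a n) = v.
Proof.
  revert a; induction n as [|n IH]; simpl; intros a Hy; [lia|].
  destruct (Z.eqb_spec a y) as [<-|Hne].
  - rewrite (sumR_ext _ (fun _ => 0)), sumR_const; [ring|].
    intros x Hx%In_zrange. destruct (Z.eqb_spec x a); [lia|auto].
  - rewrite IH by lia. ring.
Qed.

Lemma map_seq_zrange a k n :
  map (fun i => (a + Z.of_nat i)%Z) (seq k n) = zrange (a + Z.of_nat k) n.
Proof.
  revert k; induction n as [|n IH]; intros k; simpl; auto.
  rewrite IH. do 2 f_equal. lia.
Qed.

Lemma bonds_zrange N : bonds N = zrange (- Z.of_nat N) (2 * N).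
Proof. unfold bonds. rewrite map_seq_zrange. f_equal. lia. Qed.

Lemma In_moves N m : In m (moves N) ->
  (exists y, (- Z.of_nat N <= y < Z.of_nat N)%Z /\ (m = HopR y \/ m = HopL y)) \/
  m = Create Plus \/ m = Create Minus \/ m = Annih Plus \/ m = Annih Minus.
Proof.
  unfold moves. rewrite bonds_zrange. intros [Hm|Hm]%in_app_or.
  - left. apply in_flat_map in Hm as [y [Hy%In_zrange Hm]].
    exists y. split; [lia|]. simpl in Hm. destruct Hm as [<-|[<-|[]]]; tauto.
  - right. simpl in Hm. destruct Hm as [<-|[<-|[<-|[<-|[]]]]]; tauto.
Qed.

Lemma moves_length N : length (moves N) = (4 * N + 4)%nat.
Proof.
  unfold moves. rewrite length_app, bonds_zrange.
  assert (Hhops : forall l : list Z,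
    length (flat_map (fun x => [HopR x; HopL x]) l) = (2 * length l)%nat).
  { induction l as [|x l IH]; simpl; lia. }
  rewrite Hhops, zrange_length. simpl. lia.
Qed.

Definition sites (N : nat) : list Z := zrange (- Z.of_nat N - 1) (2 * N + 2).

Definition jump_bond (N : nat) (m : move) : Z :=
  match m with
  | HopR y | HopL y => y
  | Create Plus | Annih Plus => Z.of_nat N
  | Create Minus | Annih Minus => (- Z.of_nat N - 1)%Z
  end.

Definition jump_sign (m : move) : Z :=
  match m with
  | HopR _ | Create Minus | Annih Plus => 1
  | HopL _ | Annih Minus | Create Plus => -1
  end.

Lemma curr_incr_jump N x m :
  curr_incr N x m = if Z.eqb x (jump_bond N m) then jump_sign m else 0%Z.
Proof.
  destruct m as [y|y|[]|[]]; simpl; auto; now rewrite Z.eqb_sym.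
Qed.

Definition current_of_moves (N : nat) (ms : list move) (x : Z) : Z :=
  fold_right (fun m acc => (curr_incr N x m + acc)%Z) 0%Z ms.

Lemma current_of_moves_snoc N ms m x :
  current_of_moves N (ms ++ [m]) x = (current_of_moves N ms x + curr_incr N x m)%Z.
Proof. unfold current_of_moves. rewrite fold_right_app. induction ms; simpl in *; lia. Qed.

Definition total_current (N : nat) (ms : list move) : R :=
  sumR (fun x => IZR (current_of_moves N ms x)) (sites N).

Lemma total_current_snoc N ms m : In m (moves N) ->
  total_current N (ms ++ [m]) = total_current N ms + IZR (jump_sign m).
Proof.
  intros Hm. unfold total_current.
  rewrite (sumR_ext _ (fun x => IZR (current_of_moves N ms x) +
    (if Z.eqb x (jump_bond N m) then IZR (jump_sign m) else 0))), sumR_plus.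
  - f_equal. apply sumR_zrange_indicator.
    destruct (In_moves N m Hm) as [[y [Hy [-> | ->]]]|[->|[->|[->| ->]]]]; simpl; lia.
  - intros x _. rewrite current_of_moves_snoc, curr_incr_jump, plus_IZR.
    destruct (Z.eqb x (jump_bond N m)); auto.
Qed.

Definition occ (b : bool) : Z := if b then 1%Z else 0%Z.

Definition current_balance (N : nat) (eta0 xi : config) (ms : list move) : Prop :=
  forall x, (- Z.of_nat N <= x <= Z.of_nat N)%Z ->
    (current_of_moves N ms (x - 1) - current_of_moves N ms x = occ (xi x) - occ (eta0 x))%Z.

Lemma current_balance_nil N eta0 : current_balance N eta0 eta0 [].
Proof. intros x _. simpl. lia. Qed.

Lemma current_balance_snoc N alpha rp rm t eta0 xi ms m :
  current_balance N eta0 xi ms -> In m (moves N) -> rate N alpha rp rm t xi m <> 0 ->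
  current_balance N eta0 (apply_move N m xi) (ms ++ [m]).
Proof.
  intros Hb Hm Hr x Hx. specialize (Hb x Hx). rewrite !current_of_moves_snoc, !curr_incr_jump.
  destruct (In_moves N m Hm) as [[y [Hy [-> | ->]]]|[->|[->|[->| ->]]]];
    unfold rate in Hr; simpl in Hr |- *; unfold setc, side_site in *;
    repeat match type of Hr with context [xi ?z] => let E := fresh "E" in destruct (xi z) eqn:E end;
    simpl in Hr; try (exfalso; now apply Hr);
    repeat match goal with |- context [Z.eqb ?a ?b] => destruct (Z.eqb_spec a b) end;
    repeat match goal with H : x = _ |- _ => subst x end;
    repeat match goal with E : xi _ = _ |- _ => try rewrite E in *; clear E end;
    simpl occ in *; lia.
Qed.

Lemma current_balance_lipschitz N eta0 xi ms : current_balance N eta0 xi ms ->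
  forall x y, (- Z.of_nat N - 1 <= x <= y)%Z -> (y <= Z.of_nat N)%Z ->
  (Z.abs (current_of_moves N ms x - current_of_moves N ms y) <= y - x)%Z.
Proof.
  intros Hb x y Hxy Hy.
  assert (Hd : forall d : nat, (x + Z.of_nat d <= Z.of_nat N)%Z ->
    (Z.abs (current_of_moves N ms x - current_of_moves N ms (x + Z.of_nat d)) <= Z.of_nat d)%Z).
  { induction d as [|d IH]; intros Hd; [rewrite Z.add_0_r; lia|].
    specialize (Hb (x + Z.of_nat (S d))%Z ltac:(lia)).
    replace (x + Z.of_nat (S d) - 1)%Z with (x + Z.of_nat d)%Z in Hb by lia.
    specialize (IH ltac:(lia)). unfold occ in Hb. destruct (xi _), (eta0 _); lia. }
  specialize (Hd (Z.to_nat (y - x)) ltac:(lia)). rewrite Z2Nat.id in Hd by lia.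
  now replace (x + (y - x))%Z with y in Hd by lia.
Qed.

Lemma current_near_mean N eta0 xi ms x0 : current_balance N eta0 xi ms ->
  (- Z.of_nat N <= x0 <= Z.of_nat N)%Z ->
  Rabs (IZR (current_of_moves N ms x0) - total_current N ms / (2 * INR N + 2)) <= 2 * INR N + 1.
Proof.
  intros Hb Hx0. set (c := IZR (current_of_moves N ms x0)). set (K := 2 * INR N + 2).
  assert (HK : 0 < K) by (unfold K; pose proof (pos_INR N); lra).
  assert (Hlen : INR (length (sites N)) = K).
  { unfold sites, K. rewrite zrange_length, plus_INR, mult_INR. simpl. ring. }
  assert (Hsite : forall x, In x (sites N) ->
    c - (2 * INR N + 1) <= IZR (current_of_moves N ms x) <= c + (2 * INR N + 1)).
  { intros x Hx%In_zrange.
    assert (Hz : (Z.abs (current_of_moves N ms x0 - current_of_moves N ms x) <= 2 * Z.of_nat N + 1)%Z).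
    { destruct (Z.le_ge_cases x0 x).
      - pose proof (current_balance_lipschitz N eta0 xi ms Hb x0 x). lia.
      - pose proof (current_balance_lipschitz N eta0 xi ms Hb x x0). lia. }
    apply Z.abs_le in Hz as [Hz1 Hz2]. apply IZR_le in Hz1, Hz2.
    rewrite minus_IZR, opp_IZR, plus_IZR, mult_IZR, <- INR_IZR_INZ in *. unfold c. simpl in *. lra. }
  assert (Hlow := sumR_le (fun _ => c - (2 * INR N + 1)) _ (sites N) (fun x Hx => proj1 (Hsite x Hx))).
  assert (Hup := sumR_le _ (fun _ => c + (2 * INR N + 1)) (sites N) (fun x Hx => proj2 (Hsite x Hx))).
  rewrite sumR_const, Hlen in Hlow, Hup. fold (total_current N ms) in Hlow, Hup.
  assert (HA : total_current N ms / K * K = total_current N ms) by (field; lra).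
  apply Rabs_le. split; nra.
Qed.

(** * An exponential supersolution *)

Lemma rate_bounds N alpha rp rm t xi m : 0 <= rp t <= 1 -> 0 <= rm t <= 1 ->
  0 <= rate N alpha rp rm t xi m <= Rpower (INR N) (2 + alpha).
Proof.
  intros Hp Hm. assert (Hc : 0 < Rpower (INR N) (2 + alpha)) by apply exp_pos.
  destruct m as [x|x|[]|[]]; simpl;
    repeat match goal with |- context [if ?b then _ else _] => destruct b end; split; nra.
Qed.

Lemma rate_continuous N alpha rp rm xi m t :
  (forall u, continuous rp u) -> (forall u, continuous rm u) ->
  continuous (fun u => rate N alpha rp rm u xi m) t.
Proof.
  intros Hp Hm. set (c := Rpower (INR N) (2 + alpha)).
  destruct m as [x|x|[]|[]]; simpl; fold c;
    repeat match goal with |- context [if ?b then _ else _] => destruct b end;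
    try apply continuous_const; apply (continuous_scal_r c (V := R_NormedModule)); auto.
  all: apply (continuous_minus (fun _ => 1)); auto using continuous_const.
Qed.

Lemma sumR_telescope (f : Z -> R) a n :
  sumR (fun x => f x - f (x + 1)%Z) (zrange a n) = f a - f (a + Z.of_nat n)%Z.
Proof.
  revert a; induction n as [|n IH]; intros a; simpl.
  - rewrite Z.add_0_r. ring.
  - rewrite IH. replace (a + 1 + Z.of_nat n)%Z with (a + Z.pos (Pos.of_succ_nat n))%Z by lia. ring.
Qed.

Lemma total_current_drift N alpha rp rm t xi :
  sumR (fun m => rate N alpha rp rm t xi m * IZR (jump_sign m)) (moves N) =
  Rpower (INR N) (2 + alpha) * (rm t - rp t).
Proof.
  set (c := Rpower (INR N) (2 + alpha)). set (n x := IZR (occ (xi x))).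
  unfold moves. rewrite sumR_app, sumR_flat_map, bonds_zrange.
  rewrite (sumR_ext _ (fun x => c * (n x - n (x + 1)%Z))), sumR_scal, sumR_telescope.
  - replace (- Z.of_nat N + Z.of_nat (2 * N))%Z with (Z.of_nat N) by lia.
    unfold n, occ; simpl; fold c. destruct (xi (Z.of_nat N)), (xi (- Z.of_nat N)%Z); simpl; ring.
  - intros x _. unfold n, occ; simpl; fold c. destruct (xi x), (xi (x + 1)%Z); simpl; ring.
Qed.

Lemma exp_le_quadratic y : Rabs y <= 1 / 2 -> exp y <= 1 + y + 2 * y ^ 2.
Proof.
  intros Hy%Rabs_le_between.
  assert (H1 := exp_ineq1_le (- y)).
  assert (H2 : exp y * exp (- y) = 1) by (rewrite <- exp_plus, Rplus_opp_r; apply exp_0).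
  assert (0 < exp y) by apply exp_pos.
  assert (exp y * (1 - y) <= 1) by nra.
  assert (1 <= (1 + y + 2 * y ^ 2) * (1 - y)) by nra.
  nra.
Qed.

Lemma generator_exp_total_current N alpha rp rm t xi s :
  0 <= rp t <= 1 -> 0 <= rm t <= 1 -> Rabs s <= 1 ->
  sumR (fun m => rate N alpha rp rm t xi m * (exp (s * IZR (jump_sign m) / (2 * INR N + 2)) - 1))
    (moves N) <= 5 * Rpower (INR N) (2 + alpha) / (2 * INR N + 2).
Proof.
  intros Hp Hm Hs. set (K := 2 * INR N + 2). set (c := Rpower (INR N) (2 + alpha)).
  set (r := rate N alpha rp rm t xi).
  assert (HK : 2 <= K) by (unfold K; pose proof (pos_INR N); lra).
  assert (Hsign : forall m, Rabs (IZR (jump_sign m)) = 1)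
    by (intros [| |[]|[]]; simpl; rewrite ?Rabs_R1, ?Rabs_m1; reflexivity).
  apply Rle_trans with (sumR (fun m => s / K * (r m * IZR (jump_sign m)) + 2 / K ^ 2 * r m) (moves N)).
  - apply sumR_le. intros m _. destruct (rate_bounds N alpha rp rm t xi m Hp Hm) as [Hr _].
    assert (Hy : Rabs (s * IZR (jump_sign m) / K) <= 1 / K).
    { unfold Rdiv. rewrite !Rabs_mult, Hsign, Rabs_inv, (Rabs_pos_eq K) by lra.
      apply Rmult_le_compat_r; [apply Rlt_le, Rinv_0_lt_compat; lra|lra]. }
    assert (Hq := exp_le_quadratic (s * IZR (jump_sign m) / K)
      ltac:(apply Rle_trans with (1 := Hy); apply Rmult_le_reg_r with K; field_simplify; lra)).
    assert (Hsq : (s * IZR (jump_sign m) / K) ^ 2 <= 1 / K ^ 2).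
    { rewrite <- pow2_abs. replace (1 / K ^ 2) with ((1 / K) ^ 2) by (field; lra).
      apply pow_incr. split; [apply Rabs_pos|exact Hy]. }
    replace (s / K * (r m * IZR (jump_sign m)) + 2 / K ^ 2 * r m)
      with (r m * (s * IZR (jump_sign m) / K + 2 * (1 / K ^ 2))) by (field; lra).
    apply Rmult_le_compat_l; [exact Hr|lra].
  - rewrite sumR_plus, !sumR_scal. unfold r. rewrite total_current_drift. fold c.
    assert (Hc : 0 < c) by apply exp_pos.
    assert (Hsum : sumR (rate N alpha rp rm t xi) (moves N) <= 2 * K * c).
    { apply Rle_trans with (sumR (fun _ => c) (moves N)).
      - apply sumR_le. intros m _. apply rate_bounds; auto.
      - rewrite sumR_const, moves_length. unfold K. rewrite plus_INR, mult_INR. simpl. lra. }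
    assert (Hdrift : s * (rm t - rp t) <= 1).
    { apply Rle_trans with (1 := RRle_abs _). rewrite Rabs_mult.
      assert (Rabs (rm t - rp t) <= 1) by (apply Rabs_le; lra).
      pose proof (Rabs_pos s). pose proof (Rabs_pos (rm t - rp t)). nra. }
    set (S := sumR (rate N alpha rp rm t xi) (moves N)) in *.
    replace (s / K * (c * (rm t - rp t)) + 2 / K ^ 2 * S) with ((c * (s * (rm t - rp t)) + 2 * (S / K)) / K)
      by (field; lra).
    assert (Hq : S / K <= 2 * c).
    { apply (Rmult_le_reg_r K); [lra|]. replace (S / K * K) with S by (field; lra). lra. }
    assert (c * (s * (rm t - rp t)) <= c) by nra.
    unfold Rdiv. apply Rmult_le_compat_r; [apply Rlt_le, Rinv_0_lt_compat; lra|]. lra.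
Qed.


(* The factor [e^(2N+1-level)] makes it at least 1 once the current at a site reaches [level]. *)
Definition barrier (N : nat) (c T level t : R) (ms : list move) : R :=
  exp (c * (T - t) - (level - (2 * INR N + 1))) *
  (exp (total_current N ms / (2 * INR N + 2)) + exp (- (total_current N ms / (2 * INR N + 2)))).

Lemma barrier_pos N c T level t ms : 0 < barrier N c T level t ms.
Proof.
  unfold barrier. apply Rmult_lt_0_compat; [apply exp_pos|].
  pose proof (exp_pos (total_current N ms / (2 * INR N + 2))).
  pose proof (exp_pos (- (total_current N ms / (2 * INR N + 2)))). lra.
Qed.

Lemma is_derive_barrier N c T level ms t :
  is_derive (fun u => barrier N c T level u ms) t (- c * barrier N c T level t ms).
Proof. unfold barrier. auto_derive; auto. unfold Rminus. ring. Qed.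

Lemma barrier_ge_1 N eta0 xi ms x0 c T level t :
  current_balance N eta0 xi ms -> (- Z.of_nat N <= x0 <= Z.of_nat N)%Z ->
  0 <= c -> t <= T -> level <= Rabs (IZR (current_of_moves N ms x0)) ->
  1 <= barrier N c T level t ms.
Proof.
  intros Hb Hx0 Hc Ht Hlevel. unfold barrier.
  set (A := total_current N ms / (2 * INR N + 2)). set (lv := level - (2 * INR N + 1)).
  assert (HA : lv <= Rabs A).
  { pose proof (current_near_mean N eta0 xi ms x0 Hb Hx0). fold A in H.
    pose proof (Rabs_triang_inv (IZR (current_of_moves N ms x0)) A). unfold lv. lra. }
  assert (Hcosh : exp (Rabs A) <= exp A + exp (- A)).
  { pose proof (exp_pos A). pose proof (exp_pos (- A)).
    destruct (Rle_dec 0 A); [rewrite Rabs_pos_eq|rewrite Rabs_left]; lra. }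
  assert (Hdamp : exp (- lv) <= exp (c * (T - t) - lv)).
  { replace (c * (T - t) - lv) with (c * (T - t) + - lv) by ring. rewrite exp_plus.
    pose proof (exp_ineq1_le (c * (T - t))). pose proof (exp_pos (- lv)). assert (0 <= c * (T - t)) by nra. nra. }
  assert (H1 : 1 <= exp (- lv) * exp (Rabs A)).
  { rewrite <- exp_plus. pose proof (exp_ineq1_le (- lv + Rabs A)). lra. }
  pose proof (exp_pos (- lv)). pose proof (exp_pos (Rabs A)).
  apply Rle_trans with (1 := H1). apply Rmult_le_compat; try lra.
Qed.

Lemma barrier_backward N alpha rp rm t xi c T level ms :
  0 <= rp t <= 1 -> 0 <= rm t <= 1 ->
  5 * Rpower (INR N) (2 + alpha) / (2 * INR N + 2) <= c ->
  - c * barrier N c T level t ms + sumR (fun m => rate N alpha rp rm t xi m *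
    (barrier N c T level t (ms ++ [m]) - barrier N c T level t ms)) (moves N) <= 0.
Proof.
  intros Hp Hm Hc. set (K := 2 * INR N + 2) in Hc |- *. set (A := total_current N ms / K).
  set (E := exp (c * (T - t) - (level - (2 * INR N + 1)))).
  set (G s := sumR (fun m => rate N alpha rp rm t xi m * (exp (s * IZR (jump_sign m) / K) - 1)) (moves N)).
  rewrite (sumR_ext _ (fun m => E * exp A * (rate N alpha rp rm t xi m * (exp (1 * IZR (jump_sign m) / K) - 1))
                             + E * exp (- A) * (rate N alpha rp rm t xi m * (exp (-1 * IZR (jump_sign m) / K) - 1)))).
  - rewrite sumR_plus, !sumR_scal. fold (G 1) (G (-1)).
    assert (HG1 := generator_exp_total_current N alpha rp rm t xi 1 Hp Hm ltac:(rewrite Rabs_R1; lra)).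
    assert (HG2 := generator_exp_total_current N alpha rp rm t xi (-1) Hp Hm ltac:(rewrite Rabs_m1; lra)).
    fold K in HG1, HG2. fold (G 1) in HG1. fold (G (-1)) in HG2.
    assert (E * exp A * G 1 <= E * exp A * c)
      by (apply Rmult_le_compat_l; [apply Rlt_le, Rmult_lt_0_compat; apply exp_pos|lra]).
    assert (E * exp (- A) * G (-1) <= E * exp (- A) * c)
      by (apply Rmult_le_compat_l; [apply Rlt_le, Rmult_lt_0_compat; apply exp_pos|lra]).
    unfold barrier. fold K A E. lra.
  - intros m Hm'. unfold barrier. fold K A E. rewrite total_current_snoc by exact Hm'.
    replace ((total_current N ms + IZR (jump_sign m)) / K) with (A + 1 * IZR (jump_sign m) / K)
      by (unfold A, K; field; pose proof (pos_INR N); lra).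
    assert (Hneg : - (A + 1 * IZR (jump_sign m) / K) = - A + -1 * IZR (jump_sign m) / K).
    { unfold Rdiv. ring. }
    rewrite Hneg, !exp_plus. ring.
Qed.

(** * Stopping at the first large current *)

Definition hits (N : nat) (x0 : Z) (level : R) (ms : list move) : Prop :=
  exists n, level <= Rabs (IZR (current_of_moves N (firstn n ms) x0)).

Lemma hits_snoc N x0 level ms m : hits N x0 level ms -> hits N x0 level (ms ++ [m]).
Proof.
  intros [n Hn]. destruct (le_lt_dec n (length ms)).
  - exists n. now rewrite firstn_app, (proj2 (Nat.sub_0_le n _) l), app_nil_r.
  - exists (length ms). rewrite firstn_app, Nat.sub_diag, firstn_all, app_nil_r.
    now rewrite firstn_all2 in Hn by lia.
Qed.

Lemma hits_snoc_inv N x0 level ms m : ~ hits N x0 level ms -> hits N x0 level (ms ++ [m]) ->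
  level <= Rabs (IZR (current_of_moves N (ms ++ [m]) x0)).
Proof.
  intros Hno [n Hn]. destruct (le_lt_dec n (length ms)).
  - exfalso. apply Hno. exists n.
    now rewrite firstn_app, (proj2 (Nat.sub_0_le n _) l), app_nil_r in Hn.
  - rewrite firstn_all2 in Hn; auto. rewrite length_app. simpl. lia.
Qed.

Definition stopped_barrier (N : nat) (x0 : Z) (c T level t : R) (ms : list move) : R :=
  if excluded_middle_informative (hits N x0 level ms) then 1 else barrier N c T level t ms.

Definition stopped_barrier_deriv (N : nat) (x0 : Z) (c T level t : R) (ms : list move) : R :=
  if excluded_middle_informative (hits N x0 level ms) then 0 else - c * barrier N c T level t ms.

Lemma stopped_barrier_nonneg N x0 c T level t ms : 0 <= stopped_barrier N x0 c T level t ms.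
Proof.
  unfold stopped_barrier. destruct (excluded_middle_informative _); [lra|].
  apply Rlt_le, barrier_pos.
Qed.

Lemma is_derive_stopped_barrier N x0 c T level ms t :
  is_derive (fun u => stopped_barrier N x0 c T level u ms) t (stopped_barrier_deriv N x0 c T level t ms).
Proof.
  unfold stopped_barrier, stopped_barrier_deriv. destruct (excluded_middle_informative _).
  - apply (is_derive_const (V := R_NormedModule)).
  - apply is_derive_barrier.
Qed.

(* A jump either leaves the hitting status unchanged or triggers it, in which case the barrier
   was already at least 1; so stopping only lowers the generator. *)
Lemma stopped_barrier_backward N alpha rp rm t eta0 xi ms x0 c T level :
  0 <= rp t <= 1 -> 0 <= rm t <= 1 -> t <= T ->
  5 * Rpower (INR N) (2 + alpha) / (2 * INR N + 2) <= c ->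
  current_balance N eta0 xi ms -> (- Z.of_nat N <= x0 <= Z.of_nat N)%Z ->
  stopped_barrier_deriv N x0 c T level t ms + sumR (fun m => rate N alpha rp rm t xi m *
    (stopped_barrier N x0 c T level t (ms ++ [m]) - stopped_barrier N x0 c T level t ms)) (moves N)
  <= 0.
Proof.
  intros Hp Hm Ht Hc Hb Hx0.
  assert (Hc0 : 0 <= c).
  { apply Rle_trans with (2 := Hc). pose proof (pos_INR N).
    apply Rlt_le, Rdiv_lt_0_compat; [apply Rmult_lt_0_compat; [lra|apply exp_pos]|lra]. }
  unfold stopped_barrier_deriv, stopped_barrier at 2.
  destruct (excluded_middle_informative (hits N x0 level ms)) as [Hhit|Hhit].
  - rewrite (sumR_ext _ (fun _ => 0)), sumR_const; [lra|].
    intros m _. unfold stopped_barrier.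
    destruct (excluded_middle_informative _) as [_|Hno]; [ring|].
    exfalso. now apply Hno, hits_snoc.
  - apply Rle_trans with (2 := barrier_backward N alpha rp rm t xi c T level ms Hp Hm Hc).
    apply Rplus_le_compat_l, sumR_le. intros m Hm'.
    destruct (rate_bounds N alpha rp rm t xi m Hp Hm) as [Hr _].
    destruct (Req_dec (rate N alpha rp rm t xi m) 0) as [Hr0|Hr0]; [rewrite Hr0; lra|].
    apply Rmult_le_compat_l; [exact Hr|]. apply Rplus_le_compat_r.
    unfold stopped_barrier. destruct (excluded_middle_informative _) as [Hnew|]; [|lra].
    apply (barrier_ge_1 N eta0 (apply_move N m xi) _ x0); auto.
    + now apply (current_balance_snoc N alpha rp rm t).
    + now apply hits_snoc_inv.
Qed.

Lemma stopped_barrier_initial N x0 c T level : 0 < level ->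
  stopped_barrier N x0 c T level 0 [] = 2 * exp (c * T - (level - (2 * INR N + 1))).
Proof.
  intros Hlevel. unfold stopped_barrier. destruct (excluded_middle_informative _) as [[n Hn]|_].
  { rewrite firstn_nil in Hn. simpl in Hn. rewrite Rabs_R0 in Hn. lra. }
  unfold barrier, total_current. simpl map.
  rewrite (sumR_ext _ (fun _ => 0)), sumR_const, Rmult_0_r by reflexivity.
  unfold Rdiv. rewrite Rmult_0_l, Ropp_0, exp_0, Rminus_0_r. ring.
Qed.

Definition chronological (s : R) (h : history) : Prop :=
  StronglySorted (fun p q => fst p <= fst q) h /\ List.Forall (fun p => fst p <= s) h.

Lemma StronglySorted_snoc {A} (Rel : A -> A -> Prop) l x :
  StronglySorted Rel l -> List.Forall (fun a => Rel a x) l -> StronglySorted Rel (l ++ [x]).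
Proof.
  induction l as [|a l IH]; simpl; intros Hl Hx.
  - repeat constructor.
  - apply StronglySorted_inv in Hl as [Hl Ha]. inversion Hx; subst.
    constructor; auto. apply Forall_app. split; auto.
Qed.

Lemma chronological_mono s t h : s <= t -> chronological s h -> chronological t h.
Proof.
  intros Hst [Hs Hh]. split; auto. eapply Forall_impl; [|exact Hh]. simpl. intros; lra.
Qed.

Lemma chronological_snoc s t m h : s <= t -> chronological s h -> chronological t (h ++ [(t, m)]).
Proof.
  intros Hst [Hs Hh]. split.
  - apply StronglySorted_snoc; auto. eapply Forall_impl; [|exact Hh]. simpl. intros; lra.
  - apply Forall_app. split; [|repeat constructor; simpl; lra].
    eapply Forall_impl; [|exact Hh]. simpl. intros; lra.
Qed.

Lemma current_after N h t x : List.Forall (fun p => t < fst p) h -> current N h t x = 0%Z.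
Proof.
  induction 1 as [|p h Hp _ IH]; auto. unfold current in *. simpl.
  destruct (Rle_dec (fst p) t); [lra|]. now rewrite IH.
Qed.

Lemma current_prefix N h t x : StronglySorted (fun p q => fst p <= fst q) h ->
  exists n, current N h t x = current_of_moves N (firstn n (map snd h)) x.
Proof.
  induction 1 as [|p h _ [n IH] Hp]; [now exists O|].
  destruct (Rle_dec (fst p) t) as [Hle|Hgt].
  - exists (S n). unfold current in *. simpl. destruct (Rle_dec (fst p) t); [|lra]. now rewrite IH.
  - exists O. unfold current. simpl. destruct (Rle_dec (fst p) t); [lra|].
    apply current_after. eapply Forall_impl; [|exact Hp]. simpl. intros; lra.
Qed.

Lemma big_current_event_hits N alpha y0 T L h :
  StronglySorted (fun p q => fst p <= fst q) h -> big_current_event N alpha y0 T L h ->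
  hits N (Int_part (INR N * y0)) (L * Rpower (INR N) (1 + alpha)) (map snd h).
Proof.
  intros Hs [t [_ HL]]. destruct (current_prefix N h t (Int_part (INR N * y0)) Hs) as [n Hn].
  exists n. rewrite <- Hn. unfold hN in HL.
  assert (HP : 0 < Rpower (INR N) (1 + alpha)) by apply exp_pos.
  rewrite Rabs_div, (Rabs_pos_eq (Rpower _ _)) in HL by lra.
  apply (Rmult_le_compat_r (Rpower (INR N) (1 + alpha))) in HL; [|lra].
  now rewrite <- Rmult_div_swap, Rmult_div_l in HL by lra.
Qed.

Lemma Int_part_scaled_bound N y0 : -1 <= y0 <= 1 ->
  (- Z.of_nat N <= Int_part (INR N * y0) <= Z.of_nat N)%Z.
Proof.
  intros Hy0. pose proof (pos_INR N). destruct (base_Int_part (INR N * y0)) as [Hlow Hup].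
  assert (- INR N <= INR N * y0 <= INR N) by (split; nra).
  split.
  - assert (Hlt : IZR (- Z.of_nat N - 1) < IZR (Int_part (INR N * y0)))
      by (rewrite minus_IZR, opp_IZR, <- INR_IZR_INZ; lra).
    apply lt_IZR in Hlt. lia.
  - apply le_IZR. rewrite <- INR_IZR_INZ. lra.
Qed.

Lemma prob_big_current_le N alpha T rp rm eta0 y0 L :
  0 <= T -> 0 < L -> -1 <= y0 <= 1 ->
  (forall t, 0 <= t <= T -> 0 <= rp t <= 1 /\ 0 <= rm t <= 1) ->
  (forall t, continuous rp t) -> (forall t, continuous rm t) ->
  prob N alpha T rp rm eta0 (big_current_event N alpha y0 T L) <=
  2 * exp (5 * Rpower (INR N) (2 + alpha) / (2 * INR N + 2) * T
           - (L * Rpower (INR N) (1 + alpha) - (2 * INR N + 1))).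
Proof.
  intros HT HL Hy0 Hrho Hrp Hrm.
  set (x0 := Int_part (INR N * y0)). set (level := L * Rpower (INR N) (1 + alpha)).
  set (c := 5 * Rpower (INR N) (2 + alpha) / (2 * INR N + 2)).
  assert (Hx0 : (- Z.of_nat N <= x0 <= Z.of_nat N)%Z) by now apply Int_part_scaled_bound.
  apply Rle_trans with (stopped_barrier N x0 c T level 0 []).
  - apply (expect_le_Psi N alpha T rp rm) with
      (Psi := fun t _ h => stopped_barrier N x0 c T level t (map snd h))
      (dPsi := fun t _ h => stopped_barrier_deriv N x0 c T level t (map snd h))
      (Adm := fun s xi h => chronological s h /\ current_balance N eta0 xi (map snd h)).
    + intros t xi m Ht. destruct (Hrho t Ht). now apply rate_bounds.
    + intros xi m t. now apply rate_continuous.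
    + intros h. unfold indic. destruct (excluded_middle_informative _); lra.
    + intros. apply stopped_barrier_nonneg.
    + intros xi h [[Hs _] _]. unfold indic, stopped_barrier.
      destruct (excluded_middle_informative (big_current_event _ _ _ _ _ _)) as [Hev|];
        [|apply stopped_barrier_nonneg].
      destruct (excluded_middle_informative _) as [|Hno]; [lra|].
      exfalso. now apply Hno, (big_current_event_hits N alpha y0 T L).
    + intros s t xi h Hst [Hch Hb]. split; auto. now apply (chronological_mono s).
    + intros t xi h m Ht [Hch Hb] Hm Hr. split.
      * now apply (chronological_snoc t).
      * rewrite map_app. now apply (current_balance_snoc N alpha rp rm t).
    + intros. apply is_derive_stopped_barrier.
    + intros xi h m t.
      apply (continuous_ext (fun u => stopped_barrier N x0 c T level u (map snd h ++ [m])));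
        [intros u; now rewrite map_app|].
      apply (is_derive_continuous _ _ _ (is_derive_stopped_barrier _ _ _ _ _ _ t)).
    + intros t xi h Ht [_ Hb]. simpl. destruct (Hrho t Ht).
      rewrite (sumR_ext _ (fun m => rate N alpha rp rm t xi m *
        (stopped_barrier N x0 c T level t (map snd h ++ [m]) - stopped_barrier N x0 c T level t (map snd h))))
        by (intros; now rewrite map_app).
      apply (stopped_barrier_backward N alpha rp rm t eta0 xi); auto; [lra|apply Rle_refl].
    + exact HT.
    + split; [split; constructor|apply current_balance_nil].
  - rewrite stopped_barrier_initial; [lra|]. apply Rmult_lt_0_compat; [lra|apply exp_pos].
Qed.

Lemma le_Rpower_1_plus x a : 1 <= x -> 0 <= a -> x <= Rpower x (1 + a).
Proof.
  intros Hx Ha. rewrite Rpower_plus, Rpower_1 by lra.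
  assert (1 <= Rpower x a) by (rewrite <- (Rpower_O x) by lra; now apply Rle_Rpower).
  nra.
Qed.

Lemma barrier_rate_le x a : 1 <= x ->
  5 * Rpower x (2 + a) / (2 * x + 2) <= 5 / 2 * Rpower x (1 + a).
Proof.
  intros Hx. replace (2 + a) with (1 + (1 + a)) by ring.
  rewrite Rpower_plus, Rpower_1 by lra.
  assert (HP : 0 < Rpower x (1 + a)) by apply exp_pos.
  apply (Rmult_le_reg_r (2 * x + 2)); [lra|].
  replace (5 * (x * Rpower x (1 + a)) / (2 * x + 2) * (2 * x + 2)) with (5 * (x * Rpower x (1 + a)))
    by (field; lra).
  nra.
Qed.

Lemma two_exp_le_exp M T L P n c : 0 <= n <= P -> 1 <= P -> 0 <= T -> c <= 5 / 2 * P ->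
  Rabs M + 5 / 2 * T + 4 <= L -> 2 * exp (c * T - (L * P - (2 * n + 1))) <= exp (- M * P).
Proof.
  intros Hn HP HT Hc HL. set (X := c * T - (L * P - (2 * n + 1))).
  assert (Hgap : 1 <= - M * P - X).
  { unfold X.
    assert (- Rabs M * P <= - M * P) by (pose proof (Rle_abs M); nra).
    assert (c * T <= 5 / 2 * P * T) by nra.
    assert ((Rabs M + 5 / 2 * T + 4) * P <= L * P) by nra.
    lra. }
  replace (- M * P) with ((- M * P - X) + X) by ring. rewrite exp_plus.
  pose proof (exp_ineq1_le (- M * P - X)). pose proof (exp_pos X). nra.
Qed.

Theorem proposition9p1 (alpha T a : R) (rp rm : R -> R) (y0 : R)
    (eta : nat -> config) :
  0 < alpha -> 0 < T -> 0 < a < 1 / 2 ->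
  (forall t, ex_derive rp t) -> (forall t, continuous (Derive rp) t) ->
  (forall t, ex_derive rm t) -> (forall t, continuous (Derive rm) t) ->
  (forall t, 0 <= t <= T -> a <= rp t <= 1 - a /\ a <= rm t <= 1 - a) ->
  -1 <= y0 <= 1 ->
  forall M : R, exists L0 : R, forall L : R, L0 <= L ->
    exists N0 : nat, forall N : nat, (1 <= N)%nat -> (N0 <= N)%nat ->
      prob N alpha T rp rm (eta N) (big_current_event N alpha y0 T L)
        <= exp (- M * Rpower (INR N) (1 + alpha)).
Proof.
  (* Continuity of the reservoir densities suffices. *)
  intros Halpha HT Ha Hrp _ Hrm _ Hrho Hy0 M.
  exists (Rabs M + 5 / 2 * T + 4). intros L HL. exists O. intros N HN _.
  assert (HN1 : 1 <= INR N) by now apply (le_INR 1).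
  assert (HNP := le_Rpower_1_plus (INR N) alpha HN1 ltac:(lra)).
  apply Rle_trans with (1 := prob_big_current_le N alpha T rp rm (eta N) y0 L ltac:(lra)
    ltac:(pose proof (Rabs_pos M); lra) Hy0
    ltac:(intros t Ht; destruct (Hrho t Ht); lra)
    (fun t => ex_derive_continuous rp t (Hrp t)) (fun t => ex_derive_continuous rm t (Hrm t))).
  apply two_exp_le_exp; [pose proof (pos_INR N); lra|lra|lra|apply barrier_rate_le; lra|lra].
Qed.
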